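(* Let $Q_1,Q_2$ be strongly connected quivers with $Q_1\subset Q_2$ (i.e. $V(Q_1)\subset V(Q_2)$ and $A(Q_1)\subset A(Q_2)$). Then $\#A(Q_2)-\#A(Q_1)\geq \#V(Q_2)-\#V(Q_1)+1$.
   Context: A quiver is a finite oriented graph with vertex set $V(\cdot)$ and arrow set $A(\cdot)$. A quiver is strongly connected if there is a closed (oriented) path in it passing through all its vertices. *)

From mathcomp Require Import all_boot all_order all_algebra.
Set Implicit Arguments. Unset Strict Implicit. Unset Printing Implicit Defensive.

(* Quivers are modelled inside an ambient finite "universe": a finite type of
   vertices [V], a finite type of arrows [A] and source/target maps
   [src tgt : A -> V].  A quiver is a pair (VS, AS) of a set of vertices and a
   set of arrows whose endpoints lie in VS.  Parallel arrows and loops are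
   allowed (arrows are elements of A, not pairs of vertices). *)

Section Quiver.
Variables (V A : finType) (src tgt : A -> V).

Definition is_quiver (VS : {set V}) (AS : {set A}) : bool :=
  [forall a in AS, (src a \in VS) && (tgt a \in VS)].

Fixpoint walk (v : V) (p : seq A) (w : V) : bool :=
  match p with
  | [::] => v == w
  | a :: p' => (src a == v) && walk (tgt a) p' w
  end.

Definition strongly_connected (VS : {set V}) (AS : {set A}) : Prop :=
  exists v : V, exists p : seq A,
    [/\ v \in VS, all (fun a => a \in AS) p, walk v p v &
        forall x, x \in VS -> (x == v) || has (fun a => src a == x) p].

End Quiver.

From mathcomp Require Import all_boot all_order all_algebra.
From mathcomp Require Import zify.
Set Implicit Arguments. Unset Strict Implicit. Unset Printing Implicit Defensive.
Local Open Scope ring_scope.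

(* If Q1 has the same vertices as Q2, a missing arrow gives the bound.
   Otherwise the closed path of Q2 through all its vertices must both visit
   Q1 and leave it, so it contains an arrow a0 going from V(Q1) to its
   complement, and for every new vertex x an arrow with source x.  None of
   these arrows lies in Q1, and their sources are pairwise distinct (a0 starts
   inside V(Q1)), so there are at least #V(Q2) - #V(Q1) + 1 new arrows. *)

Section Walks.
Variables (V A : finType) (src tgt : A -> V).

Lemma walk_split u p w b : walk src tgt u p w -> b \in p ->
  exists p1 p2, [/\ p = p1 ++ b :: p2, walk src tgt u p1 (src b)
                  & walk src tgt (src b) (b :: p2) w].
Proof.
move=> + bp; case/splitPr: bp => p1 p2; elim: p1 u => [|a p1 IH] u /=.
  by case/andP=> /eqP <- Hw; exists [::], p2; rewrite /= eqxx Hw.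
case/andP=> /eqP Ha /IH [q1 [q2 [-> H1 H2]]].
by exists (a :: q1), q2; split; rewrite //= Ha eqxx.
Qed.

Lemma walk_exit (S : {set V}) u p w : walk src tgt u p w ->
  u \in S -> w \notin S ->
  exists2 a, a \in p & (src a \in S) && (tgt a \notin S).
Proof.
elim: p u => [|a p IH] u /=; first by move=> /eqP -> ->.
case/andP=> /eqP Ha Hw uS wS; case tS: (tgt a \in S).
  by have [b bp Hb] := IH _ Hw tS wS; exists b; rewrite ?inE ?bp ?orbT.
by exists a; rewrite ?inE ?eqxx ?Ha ?uS ?tS.
Qed.

Lemma closed_walk_exit (S : {set V}) v p x y : walk src tgt v p v ->
  x \in map src p -> y \in map src p -> x \in S -> y \notin S ->
  exists2 a, a \in p & (src a \in S) && (tgt a \notin S).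
Proof.
move=> Hw /mapP [a ap ->] /mapP [b bp ->] aS bS.
have [vS | vS] := boolP (v \in S).
  have [p1 [p2 [-> H1 _]]] := walk_split Hw bp.
  by have [c cp Hc] := walk_exit H1 vS bS; exists c; rewrite ?mem_cat ?cp.
have [p1 [p2 [-> _ H2]]] := walk_split Hw ap.
by have [c cp Hc] := walk_exit H2 aS vS; exists c; rewrite ?mem_cat ?cp ?orbT.
Qed.

Lemma closed_walk_src v p x : walk src tgt v p v -> p != [::] ->
  (x == v) || has (fun a => src a == x) p -> x \in map src p.
Proof.
move=> Hw p0 /orP [/eqP -> | /hasP [a ap /eqP <-]]; last exact: map_f.
by case: p p0 Hw => [|a p] //= _ /andP [/eqP <- _]; rewrite inE eqxx.
Qed.

End Walks.

Lemma proper_imset_card (T T' : finType) (f : T -> T') (B : {set T})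
    (W : {set T'}) :
  W \proper f @: B -> (#|W| < #|B|)%N.
Proof. by move/proper_card/leq_trans; apply; apply: leq_imset_card. Qed.

Section NewArrows.
Variables (V A : finType) (src tgt : A -> V).
Variables (VS1 VS2 : {set V}) (AS1 AS2 : {set A}).
Hypotheses (quiver1 : is_quiver src tgt VS1 AS1)
           (sconn2 : strongly_connected src tgt VS2 AS2)
           (subV : VS1 \subset VS2).

Lemma new_arrow a : a \in AS2 -> (src a \notin VS1) || (tgt a \notin VS1) ->
  a \in AS2 :\: AS1.
Proof.
move=> aA2 out; rewrite inE aA2 andbT; apply: contraL out => aA1.
by move/forall_inP: quiver1 => /(_ a aA1) /andP [-> ->].
Qed.

Lemma new_vertices_lt_new_arrows v1 : v1 \in VS1 -> VS1 != VS2 ->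
  (#|VS2 :\: VS1| < #|AS2 :\: AS1|)%N.
Proof.
move=> v1S neV; have [v [p [vS pA2 Hw cover]]] := sconn2.
have [z zW] : exists z, z \in VS2 :\: VS1.
  by apply/set0Pn; rewrite setD_eq0; apply: contra neV => sV; rewrite eqEsubset subV.
move: (zW); rewrite inE => /andP [zS1 zS2].
have v1S2 : v1 \in VS2 := subsetP subV _ v1S.
have p0 : p != [::].
  apply: contraNneq zS1 => p_nil; move: (cover z zS2) (cover v1 v1S2).
  by rewrite p_nil /= !orbF => /eqP -> /eqP <-.
have srcS2 x : x \in VS2 -> x \in map src p.
  by move=> xS2; apply: closed_walk_src Hw p0 (cover x xS2).
have inA2 a : a \in p -> a \in AS2 by move/allP: pA2; apply.
have [a0 a0p /andP [a0S1 a0out]] :=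
  closed_walk_exit Hw (srcS2 _ v1S2) (srcS2 _ zS2) v1S zS1.
apply: (@proper_imset_card _ _ src); rewrite properEneq; apply/andP; split.
  apply/negP => /eqP eqW; have : src a0 \in src @: (AS2 :\: AS1).
    by apply: imset_f; rewrite new_arrow ?inA2 ?a0out ?orbT.
  by rewrite -eqW inE a0S1.
apply/subsetP => x; rewrite inE => /andP [xS1 xS2].
have /mapP [a ap eq_x] := srcS2 x xS2.
by rewrite eq_x; apply: imset_f; rewrite new_arrow ?inA2 // -eq_x xS1.
Qed.

End NewArrows.

Theorem lemma2p3 (V A : finType) (src tgt : A -> V)
  (VS1 VS2 : {set V}) (AS1 AS2 : {set A}) :
  is_quiver src tgt VS1 AS1 -> is_quiver src tgt VS2 AS2 ->
  strongly_connected src tgt VS1 AS1 -> strongly_connected src tgt VS2 AS2 ->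
  VS1 \subset VS2 -> AS1 \subset AS2 -> (VS1, AS1) != (VS2, AS2) ->
  (#|AS2|%:Z - #|AS1|%:Z >= #|VS2|%:Z - #|VS1|%:Z + 1)%R.
Proof.
move=> quiver1 _ [v1 [_ [v1S _ _ _]]] sconn2 subV subA neQ.
suff lt_new : (#|VS2 :\: VS1| < #|AS2 :\: AS1|)%N.
  move: lt_new; rewrite (cardsDS subV) (cardsDS subA).
  have := subset_leq_card subV; have := subset_leq_card subA; lia.
have [eqV | neV] := eqVneq VS1 VS2; last first.
  exact: (new_vertices_lt_new_arrows quiver1 sconn2 subV v1S neV).
have ltA : AS1 \proper AS2.
  by rewrite properEneq subA andbT; apply: contraNneq neQ => ->; rewrite eqV.
by rewrite eqV setDv cards0 (cardsDS subA) subn_gt0 proper_card.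
Qed.
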